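(* Let $p<q$ be coprime positive integers and $m$ a positive integer such that $q-p$ divides $m$; put $a=m/(q-p)$. Let $A=\mathbb C[X_0,X_1,X_2,X_3,X_4]$ with the $\mathbb Z\times\mathbb Z/m\mathbb Z$-grading in which $X_0$ has degree $(1,0)$, $X_1,X_2$ have degree $(-p,-1)$ and $X_3,X_4$ have degree $(q,1)$. For $s\in\mathbb C$ let $$J_s=(X_0^{q-p},\;X_2,\;X_4,\;s-X_1^{aq}X_3^{ap})\subset A.$$ Then for every $s\in\mathbb C$ and every $(n,d)\in\mathbb Z\times\mathbb Z/m\mathbb Z$ one has $\dim_{\mathbb C}(A/J_s)_{(n,d)}=1$.
   Context: The grading is the weight grading for the action of $G_0\times G_m$ ($G_0\cong\mathbb C^*$, $G_m\cong\mu_m$) on $\mathbb C^5$ given by $t\cdot(x_0,\dots,x_4)=(tx_0,t^{-p}x_1,t^{-p}x_2,t^qx_3,t^qx_4)$ and $\zeta\cdot(x_0,\dots,x_4)=(x_0,\zeta^{-1}x_1,\zeta^{-1}x_2,\zeta x_3,\zeta x_4)$. The condition that $q-p$ divides $m$ is exactly the condition that the associated Popov $SL(2)$-variety $E_{p/q,m}$ is toric. *)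

From HB Require Import structures.
From mathcomp Require Import all_boot all_order all_algebra.
From mathcomp Require Import mpoly.
Set Implicit Arguments. Unset Strict Implicit. Unset Printing Implicit Defensive.
Import Order.TTheory GRing.Theory Num.Theory.
Local Open Scope ring_scope.

(* The first component (in Z) and an integer representative of the second
   component (in Z/mZ; reduced mod m where used). *)
Definition wdegZ (p q : nat) (mo : 'X_{1..5}) : int :=
  (mo ord0)%:Z - (p%:Z) * ((mo (inord 1))%:Z + (mo (inord 2))%:Z)
  + (q%:Z) * ((mo (inord 3))%:Z + (mo (inord 4))%:Z).

Definition wdegZm (mo : 'X_{1..5}) : int :=
  - ((mo (inord 1))%:Z + (mo (inord 2))%:Z) + ((mo (inord 3))%:Z + (mo (inord 4))%:Z).

(* f is homogeneous of degree (n, d mod m) for the Z x Z/mZ grading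
   (the zero polynomial is homogeneous of every degree). *)
Definition homog_of (K : fieldType) (p q m : nat) (n d : int) (f : {mpoly K[5]}) : Prop :=
  forall mo, mo \in msupp f -> wdegZ p q mo = n /\ (wdegZm mo = d %[mod m%:Z])%Z.

Definition in_ideal (K : fieldType) (k : nat) (g : 'I_k -> {mpoly K[5]}) (f : {mpoly K[5]}) : Prop :=
  exists c : 'I_k -> {mpoly K[5]}, f = \sum_(i < k) c i * g i.

Definition Jgens (K : fieldType) (p q a : nat) (s : K) : 'I_4 -> {mpoly K[5]} :=
  fun i => match val i with
           | 0%N => 'X_(inord 0) ^+ (q - p)
           | 1%N => 'X_(inord 2)
           | 2%N => 'X_(inord 4)
           | _ => s%:MP - 'X_(inord 1) ^+ (a * q) * 'X_(inord 3) ^+ (a * p)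
           end.

(* dim_K (A/J)_{(n,d)} = 1, where (A/J)_{(n,d)} is the image in A/J of the
   homogeneous component A_{(n,d)}: this image has a basis consisting of one
   element, i.e. it is spanned by the class of some homogeneous f of degree
   (n,d) whose class is nonzero. *)
Definition graded_quot_dim1 (K : fieldType) (inJ : {mpoly K[5]} -> Prop)
    (hom : {mpoly K[5]} -> Prop) : Prop :=
  exists f, [/\ hom f, ~ inJ f & forall h, hom h -> exists c : K, inJ (h - c *: f)].

(* Modulo the monomial generators X_0^(q-p), X_2, X_4 of J_s, the surviving
   monomials are X^e = X_0^i X_1^j X_3^k with i < q - p.  Those of degree (n, d)
   share the same i and form a single ray e + t * step, where
   X^step = X_1^(aq) X_3^(ap) has degree (0, 0) and X^(e + step) = s X^e
   modulo J_s.  So the component is spanned by X^e for the first point e of the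
   ray, and X^e is not in J_s because the functional f |-> sum_t s^t f_(e + t step)
   takes the value 1 on X^e but kills J_s: on multiples of s - X^step it
   telescopes, and the monomial generators divide no point of the ray. *)

From HB Require Import structures.
From mathcomp Require Import all_boot all_order all_algebra.
From mathcomp Require Import mpoly.
From mathcomp Require Import zify ring.
Set Implicit Arguments. Unset Strict Implicit. Unset Printing Implicit Defensive.
Import Order.TTheory GRing.Theory Num.Theory.
Local Open Scope ring_scope.

Section WeightEquations.

Variables (p q a : nat) (n d : int).
Hypotheses (p_gt0 : (0 < p)%N) (p_lt_q : (p < q)%N) (a_gt0 : (0 < a)%N).

Definition std_exp (i j k : nat) : Prop :=
  [/\ (i < q - p)%N, i%:Z - p%:Z * j%:Z + q%:Z * k%:Z = n
    & (k%:Z - j%:Z = d %[mod (a * (q - p))%N])%Z].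

Let modulusE : (a * (q - p))%N%:Z = a%:Z * (q%:Z - p%:Z).
Proof. by rewrite PoszM -subzn // ltnW. Qed.

Lemma std_exp_shift i j k : std_exp i (j + a * q) (k + a * p) -> std_exp i j k.
Proof.
case=> hi hdeg hmod; split=> //; first by rewrite -hdeg !PoszD !PoszM; ring.
move/eqP: hmod; rewrite eqz_mod_dvd => /dvdzP [v hv].
apply/eqP; rewrite eqz_mod_dvd; apply/dvdzP; exists (v + 1).
by rewrite mulrDl -hv modulusE !PoszD !PoszM; ring.
Qed.

Lemma std_exp_exists : exists i j k, std_exp i j k.
Proof.
pose r := q%:Z - p%:Z; have r_neq0 : r != 0 by rewrite /r; lia.
pose x := n - q%:Z * d; pose i := (x %% r)%Z; pose J := (x %/ r)%Z.
have x_eq : x = J * r + i by exact: divz_eq.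
have i_ge0 : 0 <= i by exact: modz_ge0.
have i_lt_r : i < r by move: (ltz_mod x r_neq0); rewrite /r; lia.
pose U := `|J| + `|d|.
have aq_ge1 : 1 <= a%:Z * q%:Z by nia.
have ap_ge1 : 1 <= a%:Z * p%:Z by nia.
have j_ge0 : 0 <= J + U * (a%:Z * q%:Z).
  have : U * 1 <= U * (a%:Z * q%:Z) by apply: ler_wpM2l; rewrite /U; lia.
  by move: (ler_norm (- J)); rewrite normrN /U; lia.
have k_ge0 : 0 <= J + d + U * (a%:Z * p%:Z).
  have : U * 1 <= U * (a%:Z * p%:Z) by apply: ler_wpM2l; rewrite /U; lia.
  by move: (ler_norm (- J)) (ler_norm (- d)); rewrite !normrN /U; lia.
exists (absz i), (absz (J + U * (a%:Z * q%:Z))), (absz (J + d + U * (a%:Z * p%:Z))).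
rewrite /std_exp !gez0_abs //; split; first by lia.
  by rewrite -[n](subrK (q%:Z * d)) -/x x_eq /r; ring.
apply/eqP; rewrite eqz_mod_dvd; apply/dvdzP; exists (- U).
by rewrite modulusE; ring.
Qed.

(* (j, k) is the first point of its ray (j + a q t, k + a p t). *)
Definition reduced_exp (j k : nat) := ~~ ((a * q <= j) && (a * p <= k))%N.

Lemma std_exp_reduce i j k :
  std_exp i j k -> exists j0 k0, std_exp i j0 k0 /\ reduced_exp j0 k0.
Proof.
elim/ltn_ind: j k => j IH k hs.
have [/andP [hj hk] | hred] := boolP ((a * q <= j) && (a * p <= k))%N; last first.
  by exists j, k.
have aq_gt0 : (0 < a * q)%N by rewrite muln_gt0 a_gt0; lia.
apply: (IH (j - a * q)%N _ (k - a * p)%N); first by lia.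
by apply: std_exp_shift; rewrite !subnK.
Qed.

Lemma std_exp_line i j k i' j' k' : std_exp i j k -> std_exp i' j' k' ->
  i' = i /\ exists u : int,
    j'%:Z = j%:Z + u * (a * q)%N%:Z /\ k'%:Z = k%:Z + u * (a * p)%N%:Z.
Proof.
case=> hi hdeg /eqP; rewrite eqz_mod_dvd => /dvdzP [v hv].
case=> hi' hdeg' /eqP; rewrite eqz_mod_dvd => /dvdzP [v' hv'].
rewrite modulusE in hv hv'.
pose w := j'%:Z - j%:Z + q%:Z * a%:Z * (v' - v).
have i_eq : i%:Z = i'%:Z + w * (q%:Z - p%:Z).
  have hk' : k'%:Z = k%:Z + (j'%:Z - j%:Z) + (v' - v) * (a%:Z * (q%:Z - p%:Z)).
    by rewrite mulrBl -hv -hv'; ring.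
  have : i%:Z = n + p%:Z * j%:Z - q%:Z * k%:Z by rewrite -hdeg; ring.
  by rewrite -hdeg' hk' /w => ->; ring.
have ii' : i' = i.
  have : (i%:Z %% (q%:Z - p%:Z) = i'%:Z %% (q%:Z - p%:Z))%Z.
    by rewrite i_eq addrC modzMDl.
  by rewrite !modz_small; [case | lia | lia].
split=> //; exists (v - v').
have w0 : w = 0.
  have : w * (q%:Z - p%:Z) = 0 by move: i_eq; rewrite ii'; lia.
  by move/eqP; rewrite mulf_eq0 => /orP [/eqP //|]; lia.
have hj : j'%:Z = j%:Z + (v - v') * (a%:Z * q%:Z) by move: w0; rewrite /w; lia.
by rewrite !PoszM hj; split=> //; lia.
Qed.

Lemma reduced_std_exp_ray i0 j0 k0 i j k :
  std_exp i0 j0 k0 -> reduced_exp j0 k0 -> std_exp i j k ->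
  i = i0 /\ exists t, j = (j0 + a * q * t)%N /\ k = (k0 + a * p * t)%N.
Proof.
move=> hs0 hred hs; have [-> [u [hj hk]]] := std_exp_line hs0 hs; split=> //.
have u_ge0 : 0 <= u.
  rewrite leNgt; apply/negP => u_lt0.
  move: hred; rewrite /reduced_exp negb_and -!ltnNge.
  have aq_ge1 : (1 <= a * q)%N by rewrite muln_gt0 a_gt0; lia.
  have ap_ge1 : (1 <= a * p)%N by rewrite muln_gt0 a_gt0; lia.
  by case/orP; nia.
exists `|u|%N; split; apply/eqP; rewrite -eqz_nat PoszD !PoszM gez0_abs // -PoszM.
  by rewrite hj mulrC.
by rewrite hk mulrC.
Qed.

End WeightEquations.

Lemma mcoeffMX_eq0 (K : fieldType) n (c : {mpoly K[n]}) (g e : 'X_{1..n}) :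
  ~~ (g <= e)%MM -> (c * 'X_[g])@_e = 0.
Proof.
move=> g_le_e; apply: memN_msupp_eq0; apply: contra g_le_e.
by rewrite (perm_mem (msuppMX c g)) => /mapP [e' _ ->]; rewrite lem_addr.
Qed.

Section RayCoefficient.

Variables (K : fieldType) (n : nat) (s : K) (e step : 'X_{1..n}).

Definition ray_coef (N : nat) (f : {mpoly K[n]}) : K :=
  \sum_(t < N) s ^+ t * f@_(e + step *+ t).

Lemma ray_coef_sum N I (r : seq I) (P : pred I) (F : I -> {mpoly K[n]}) :
  ray_coef N (\sum_(i <- r | P i) F i) = \sum_(i <- r | P i) ray_coef N (F i).
Proof.
rewrite /ray_coef exchange_big /=; apply: eq_bigr => t _.
by rewrite (raddf_sum (mcoeff _)) mulr_sumr.
Qed.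

Hypothesis step_mdeg_gt0 : (0 < mdeg step)%N.

Lemma ray_coefX N : ray_coef N.+1 'X_[e] = 1.
Proof.
rewrite /ray_coef big_ord_recl mulm0n addm0 expr0 mul1r mcoeffX eqxx big1 ?addr0 //.
move=> t _; rewrite mcoeffX; case: eqP => [/(congr1 mdeg)|_]; last by rewrite mulr0.
by rewrite mdegD mdegMn lift0; nia.
Qed.

Lemma mcoeff_ray_eq0 (c : {mpoly K[n]}) N :
  (msize c <= N)%N -> c@_(e + step *+ N) = 0.
Proof.
move=> c_size; apply/memN_msupp_eq0/msize_mdeg_ge.
by rewrite mdegD mdegMn; apply: (leq_trans c_size); nia.
Qed.

Lemma ray_coef_mulX_eq0 (c : {mpoly K[n]}) g N :
  (forall t, ~~ (g <= e + step *+ t)%MM) -> ray_coef N (c * 'X_[g]) = 0.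
Proof.
by move=> g_ndvd; rewrite /ray_coef big1 // => t _; rewrite mcoeffMX_eq0 ?mulr0.
Qed.

Lemma ray_coef_mul_binomial (c : {mpoly K[n]}) N : ~~ (step <= e)%MM ->
  ray_coef N.+1 (c * (s%:MP - 'X_[step])) = s ^+ N.+1 * c@_(e + step *+ N).
Proof.
move=> step_ndvd.
have coefE x : (c * (s%:MP - 'X_[step]))@_x = s * c@_x - (c * 'X_[step])@_x.
  by rewrite mulrBr mcoeffB [c * s%:MP]mulrC mul_mpolyC mcoeffZ.
elim: N => [|N IH].
  rewrite /ray_coef big_ord1 mulm0n addm0 coefE mcoeffMX_eq0 //.
  by rewrite subr0 expr0 mul1r expr1.
rewrite /ray_coef big_ord_recr /= -/(ray_coef N.+1 _) IH coefE.
rewrite mulmS addmA [(e + step)%MM]addmC -addmA mcoeffMX !exprS.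
ring.
Qed.

End RayCoefficient.

Section Ideal.

Variables (K : fieldType) (k : nat) (g : 'I_k -> {mpoly K[5]}).

Lemma in_ideal0 : in_ideal g 0.
Proof. by exists (fun=> 0); rewrite big1 // => i _; rewrite mul0r. Qed.

Lemma in_idealD f1 f2 : in_ideal g f1 -> in_ideal g f2 -> in_ideal g (f1 + f2).
Proof.
move=> [c1 ->] [c2 ->]; exists (fun i => c1 i + c2 i); rewrite -big_split.
by apply: eq_bigr => i _; rewrite mulrDl.
Qed.

Lemma in_idealMl h f : in_ideal g f -> in_ideal g (h * f).
Proof.
move=> [c ->]; exists (fun i => h * c i); rewrite mulr_sumr.
by apply: eq_bigr => i _; rewrite mulrA.
Qed.

Lemma in_idealZ (x : K) f : in_ideal g f -> in_ideal g (x *: f).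
Proof. by rewrite -mul_mpolyC; apply: in_idealMl. Qed.

Lemma in_ideal_gen i : in_ideal g (g i).
Proof.
exists (fun j => (j == i)%:R); rewrite (bigD1 i) //= eqxx mul1r big1 ?addr0 //.
by move=> j /negbTE ->; rewrite mul0r.
Qed.

Lemma in_idealX i e mo : g i = 'X_[e] -> (e <= mo)%MM -> in_ideal g 'X_[mo].
Proof.
by move=> gi e_le; rewrite -(submK e_le) mpolyXD -gi; apply/in_idealMl/in_ideal_gen.
Qed.

Lemma in_ideal_span f h :
    (forall mo, mo \in msupp h -> exists c, in_ideal g ('X_[mo] - c *: f)) ->
  exists c, in_ideal g (h - c *: f).
Proof.
move=> hmo; rewrite (mpolyE h) big_seq.
apply: (big_ind (fun x => exists c, in_ideal g (x - c *: f))).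
- by exists 0; rewrite scale0r subr0; apply: in_ideal0.
- move=> x y [cx hx] [cy hy]; exists (cx + cy).
  by rewrite scalerDl opprD addrACA; apply: in_idealD.
- move=> mo /hmo [c hc]; exists (h@_mo * c).
  by rewrite -scalerA -scalerBr; apply: in_idealZ.
Qed.

Lemma in_ideal_ray (s : K) i step : g i = s%:MP - 'X_[step] ->
  forall e t, in_ideal g ('X_[e + step *+ t] - s ^+ t *: 'X_[e]).
Proof.
move=> gi e; elim=> [|t IH].
  by rewrite mulm0n addm0 expr0 scale1r subrr; apply: in_ideal0.
have -> : 'X_[e + step *+ t.+1] - s ^+ t.+1 *: 'X_[e] =
    - ('X_[e + step *+ t] * g i) + s *: ('X_[e + step *+ t] - s ^+ t *: 'X_[e]).
  rewrite gi mulmS addmA [(e + step)%MM]addmC -addmA mpolyXD.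
  by rewrite -!mul_mpolyC !rmorphXn /= exprS; ring.
apply: in_idealD; last exact: in_idealZ.
by rewrite -mulN1r; apply/in_idealMl/in_idealMl/in_ideal_gen.
Qed.

End Ideal.

Definition mnm013 (i j k : nat) : 'X_{1..5} :=
  [multinom (match nat_of_ord l with 0 => i | 1 => j | 3 => k | _ => 0 end)%N | l < 5].

Lemma mnm013E i j k (l : 'I_5) :
  mnm013 i j k l = (match nat_of_ord l with 0 => i | 1 => j | 3 => k | _ => 0 end)%N.
Proof. exact: mnmE. Qed.

Lemma mnm013_ray i j k A B t :
  (mnm013 i j k + mnm013 0 A B *+ t)%MM = mnm013 i (j + A * t) (k + B * t).
Proof.
apply/mnmP => l; rewrite mnmDE mulmnE !mnm013E.
by case: l => [[|[|[|[|[|l]]]]] hl]; rewrite /= ?mul0n ?addn0.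
Qed.

Lemma mnm013_eta (mo : 'X_{1..5}) : mo (inord 2) = 0%N -> mo (inord 4) = 0%N ->
  mo = mnm013 (mo (inord 0)) (mo (inord 1)) (mo (inord 3)).
Proof.
move=> mo2 mo4; apply/mnmP => l; rewrite mnm013E.
have -> : l = inord l by apply: val_inj; rewrite /= inordK.
by case: l => [[|[|[|[|[|l]]]]] hl]; rewrite /= ?inordK.
Qed.

Lemma wdegZ_mnm013 p q i j k :
  wdegZ p q (mnm013 i j k) = i%:Z - p%:Z * j%:Z + q%:Z * k%:Z.
Proof. by rewrite /wdegZ !mnm013E !inordK //= !addr0. Qed.

Lemma wdegZm_mnm013 i j k : wdegZm (mnm013 i j k) = k%:Z - j%:Z.
Proof. by rewrite /wdegZm !mnm013E !inordK //= !addr0 addrC. Qed.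

Lemma mpolyX_mnm013 (K : fieldType) i j k :
  'X_[mnm013 i j k] = 'X_(inord 0) ^+ i * 'X_(inord 1) ^+ j * 'X_(inord 3) ^+ k
    :> {mpoly K[5]}.
Proof.
rewrite !mpolyXn -!mpolyXD; congr 'X_[_]; apply/mnmP => l.
rewrite !mnmDE !mulmnE !mnm1E mnm013E -!val_eqE /= !inordK //.
by case: l => [[|[|[|[|[|l]]]]] hl]; rewrite /= ?mul1n ?mul0n ?addn0 ?add0n.
Qed.

Lemma std_exp_mnm013 p q a n d i j k : (i < q - p)%N ->
  std_exp p q a n d i j k <->
  wdegZ p q (mnm013 i j k) = n
  /\ (wdegZm (mnm013 i j k) = d %[mod (a * (q - p))%N])%Z.
Proof. by move=> i_lt; rewrite wdegZ_mnm013 wdegZm_mnm013; split=> [[]|[]]. Qed.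

Section QuotientBasis.

Variables (K : fieldType) (p q a : nat) (s : K).

Local Notation J := (Jgens p q a s).
Local Notation step := (mnm013 0 (a * q) (a * p)).

Lemma mpolyX_step :
  'X_(inord 1) ^+ (a * q) * 'X_(inord 3) ^+ (a * p) = 'X_[step] :> {mpoly K[5]}.
Proof. by rewrite mpolyX_mnm013 expr0 mul1r. Qed.

Lemma Jgens_ray : J (inord 3) = s%:MP - 'X_[step].
Proof. by rewrite /Jgens /= inordK //= mpolyX_step. Qed.

Lemma X_in_J_or_mnm013 mo :
  in_ideal J 'X_[mo] \/ exists i j k, (i < q - p)%N /\ mo = mnm013 i j k.
Proof.
have [mo2|mo2] := eqVneq (mo (inord 2)) 0%N; last first.
  left; apply: (in_idealX (i := inord 1) (e := U_(inord 2))).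
    by rewrite /Jgens /= inordK.
  by rewrite lep1mP.
have [mo4|mo4] := eqVneq (mo (inord 4)) 0%N; last first.
  left; apply: (in_idealX (i := inord 2) (e := U_(inord 4))).
    by rewrite /Jgens /= inordK.
  by rewrite lep1mP.
have [mo0|mo0] := leqP (q - p) (mo (inord 0)).
  left; apply: (in_idealX (i := inord 0) (e := U_(inord 0) *+ (q - p))).
    by rewrite /Jgens /= inordK //= mpolyXn.
  by apply/mnm_lepP => l; rewrite mulmnE mnm1E; case: eqP => [<-|_]; rewrite ?mul1n ?mul0n.
right; exists (mo (inord 0)), (mo (inord 1)), (mo (inord 3)).
by split; last exact: mnm013_eta.
Qed.

Hypotheses (a_gt0 : (0 < a)%N) (q_gt0 : (0 < q)%N).

Lemma mdeg_step_gt0 : (0 < mdeg step)%N.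
Proof.
rewrite mdegE (bigD1 (inord 1)) //= mnm013E inordK //=.
by rewrite addn_gt0 muln_gt0 a_gt0 q_gt0.
Qed.

Lemma ray_coef_mul_Jgens i0 j0 k0 (c : {mpoly K[5]}) N (i : 'I_4) :
  (i0 < q - p)%N -> reduced_exp p q a j0 k0 -> (msize c <= N)%N ->
  ray_coef s (mnm013 i0 j0 k0) step N.+1 (c * J i) = 0.
Proof.
move=> i0_lt red c_size.
have ray_ndvd (g : 'X_{1..5}) l :
    (forall t, mnm013 i0 (j0 + a * q * t) (k0 + a * p * t) l < g l)%N ->
  forall t, ~~ (g <= mnm013 i0 j0 k0 + step *+ t)%MM.
  by move=> lt t; rewrite mnm013_ray; apply/mnm_lepP => /(_ l); rewrite leqNgt lt.
case: i => [[|[|[|[|//]]]] hi]; rewrite /Jgens /=.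
- rewrite mpolyXn ray_coef_mulX_eq0 //; apply: (ray_ndvd _ (inord 0)) => t.
  by rewrite mulmnE mnm1E eqxx mul1n mnm013E inordK.
- rewrite ray_coef_mulX_eq0 //; apply: (ray_ndvd _ (inord 2)) => t.
  by rewrite mnm1E eqxx mnm013E inordK.
- rewrite ray_coef_mulX_eq0 //; apply: (ray_ndvd _ (inord 4)) => t.
  by rewrite mnm1E eqxx mnm013E inordK.
rewrite mpolyX_step ray_coef_mul_binomial ?mcoeff_ray_eq0 ?mdeg_step_gt0 ?mulr0 //.
apply/mnm_lepP => le; move: red (le (inord 1)) (le (inord 3)).
rewrite /reduced_exp !mnm013E !inordK //= => /negP red le1 le3.
by apply: red; rewrite le1 le3.
Qed.

Lemma mnm013X_notin_J i0 j0 k0 : (i0 < q - p)%N -> reduced_exp p q a j0 k0 ->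
  ~ in_ideal J 'X_[mnm013 i0 j0 k0].
Proof.
move=> i0_lt red [c hc].
have := congr1 (ray_coef s (mnm013 i0 j0 k0) step (\sum_i msize (c i)).+1) hc.
rewrite ray_coefX ?mdeg_step_gt0 //.
rewrite ray_coef_sum big1 => [/eqP|i _]; first by rewrite oner_eq0.
by apply: ray_coef_mul_Jgens => //; rewrite (bigD1 i) //= leq_addr.
Qed.

End QuotientBasis.

Theorem theorem4p2 (C : numClosedFieldType) (p q m : nat)
    (hp : (0 < p)%N) (hpq : (p < q)%N) (hcop : coprime p q)
    (hm : (0 < m)%N) (hdiv : (q - p %| m)%N) :
  let a := (m %/ (q - p))%N in
  forall (s : C) (n d : int),
    graded_quot_dim1 (in_ideal (Jgens p q a s)) (homog_of p q m n d).
Proof.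
move=> a s n d.
have m_eq : m = (a * (q - p))%N by rewrite /a divnK.
have a_gt0 : (0 < a)%N by move: hm; rewrite m_eq muln_gt0 => /andP [].
have q_gt0 : (0 < q)%N by apply: leq_trans hpq.
have [i [j [k hs]]] := std_exp_exists n d hp hpq a_gt0.
have [j0 [k0 [hs0 red]]] := std_exp_reduce hp hpq a_gt0 hs.
have i_lt : (i < q - p)%N by case: hs0.
exists 'X_[mnm013 i j0 k0]; split.
- by move=> mo; rewrite msuppX mem_seq1 => /eqP ->; rewrite m_eq -std_exp_mnm013.
- exact: mnm013X_notin_J.
move=> h h_homog; apply: in_ideal_span => mo /h_homog; rewrite m_eq => mo_deg.
have [mo_in_J|[i' [j' [k' [i'_lt mo_eq]]]]] := X_in_J_or_mnm013 p q a s mo.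
  by exists 0; rewrite scale0r subr0.
move: mo_deg; rewrite mo_eq -std_exp_mnm013 // => hs'.
have [-> [t [-> ->]]] := reduced_std_exp_ray hp hpq a_gt0 hs0 red hs'.
by exists (s ^+ t); rewrite -mnm013_ray; apply/in_ideal_ray/Jgens_ray.
Qed.
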